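(* In the setting below, let $p,q\in X$ with $S_p\cup S_q=E$ and $|S_p\cap S_q|=n-1$, and let $r\in X$ with $S_r\ne S_p$, $S_r\ne S_q$ and $|S_r|\ge 2$. Then either $S_r\subseteq S_p\cap S_q$ or $S_r=(S_p\setminus S_q)\cup(S_q\setminus S_p)$.
   Context: Setting: $E=\{e_0,\dots,e_n\}\subset\mathbb R^n$ is the vertex set of an $n$-simplex with $e_0+\cdots+e_n=0$, and $X\subset\mathbb R^n\setminus\{0\}$ is a finite set with $E\subseteq X$, no element of $X$ a positive multiple of another, such that every $n+1$ points of $X$ are in good position. (A finite set $A$ is in conical position if $0\notin\operatorname{conv}A$ and no point of $A$ lies in the positive hull—set of nonnegative linear combinations—of the other points; it is in good position otherwise.) For $p\in X$, the support $S_p$ is the minimal subset of $E$ whose positive hull contains $p$. *)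

From HB Require Import structures.
From mathcomp Require Import all_boot all_order all_algebra.
Set Implicit Arguments. Unset Strict Implicit. Unset Printing Implicit Defensive.
Import Order.TTheory GRing.Theory Num.Theory.
Local Open Scope ring_scope.

Section Defs.
Variables (R : realFieldType) (n : nat).
Local Notation V := 'rV[R]_n.

Definition in_pos_hull (A : seq V) (v : V) : Prop :=
  exists c : V -> R, (forall a, a \in A -> 0 <= c a) /\ v = \sum_(a <- undup A) c a *: a.

Definition in_conv (A : seq V) (v : V) : Prop :=
  exists c : V -> R, (forall a, a \in A -> 0 <= c a) /\
    \sum_(a <- undup A) c a = 1 /\ v = \sum_(a <- undup A) c a *: a.

Definition conical_position (A : seq V) : Prop :=
  ~ in_conv A 0 /\ forall a, a \in A -> ~ in_pos_hull [seq b <- A | b != a] a.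

Definition good_position (A : seq V) : Prop := ~ conical_position A.

Definition affinely_independent (e : 'I_n.+1 -> V) : Prop :=
  forall c : 'I_n.+1 -> R, \sum_i c i *: e i = 0 -> \sum_i c i = 0 -> forall i, c i = 0.

Definition in_pos_hullE (e : 'I_n.+1 -> V) (S : {set 'I_n.+1}) (p : V) : Prop :=
  in_pos_hull [seq e i | i in S] p.

Definition is_support (e : 'I_n.+1 -> V) (p : V) (S : {set 'I_n.+1}) : Prop :=
  in_pos_hullE e S p /\ forall T : {set 'I_n.+1}, T \proper S -> ~ in_pos_hullE e T p.

Definition setting (e : 'I_n.+1 -> V) (X : seq V) : Prop :=
  affinely_independent e /\
  \sum_i e i = 0 /\
  (forall i, e i \in X) /\
  (forall x, x \in X -> x != 0) /\
  (forall x y (t : R), x \in X -> y \in X -> 0 < t -> x = t *: y -> x = y) /\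
  (forall A : seq V, uniq A -> size A = n.+1 -> {subset A <= X} -> good_position A).

End Defs.

From HB Require Import structures.
From mathcomp Require Import all_boot all_order all_algebra.
From mathcomp Require Import ring lra zify.
Set Implicit Arguments. Unset Strict Implicit. Unset Printing Implicit Defensive.
Import Order.TTheory GRing.Theory Num.Theory.
Local Open Scope ring_scope.

(* Since the vertices e_i are affinely independent and sum to 0, barycentric
   coordinates are determined up to an additive constant.  A point with
   support S has coordinates positive on S and zero off S, and no support is
   all of E; so Sp and Sq are the complements of two vertices a <> b.

   The geometric tool is a criterion for conical position: if the relations
   of a list of distinct vectors form a line spanned by a weight with two
   positive and two negative entries, the list is in conical position.  For
   x, y in X and j <> l, the frame x, y, e_i (i <> j, l) has n+1 entries and
   its relations are computed from the coordinates of x and y; this yields a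
   sign obstruction on those coordinates ([frame_obstruction]).  Three such
   obstructions show that Sr cannot contain a (or b) and a vertex outside
   {a, b} while missing another one; a case analysis on finite sets
   ([pair_trichotomy]) then leaves exactly the two alternatives. *)

Section ConicalCriterion.
Variables (R : realFieldType) (n : nat).
Local Notation V := 'rV[R]_n.

Definition relation (A : seq V) (c : V -> R) : Prop := \sum_(b <- A) c b *: b = 0.

Lemma one_differs (T : eqType) (u1 u2 a : T) : u1 != u2 -> (u1 != a) || (u2 != a).
Proof. by apply: contraNT; rewrite negb_or !negbK => /andP [/eqP -> /eqP ->]. Qed.

(* Then a relation that is nonnegative at one entry
   of each sign is zero, which rules out both a convex combination equal to 0
   and a point lying in the positive hull of the others. *)
Lemma conical_of_relation_line (A : seq V) (w : V -> R) (x1 x2 y1 y2 : V) :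
  uniq A -> x1 \in A -> x2 \in A -> y1 \in A -> y2 \in A ->
  x1 != x2 -> y1 != y2 -> 0 < w x1 -> 0 < w x2 -> w y1 < 0 -> w y2 < 0 ->
  (forall c, relation A c -> exists k, forall b, b \in A -> c b = k * w b) ->
  conical_position A.
Proof.
move=> uA x1A x2A y1A y2A x12 y12 wx1 wx2 wy1 wy2 line.
have vanish c : relation A c -> (0 <= c x1) || (0 <= c x2) ->
    (0 <= c y1) || (0 <= c y2) -> forall b, b \in A -> c b = 0.
  move=> /line [k ck] hx hy.
  have k_ge0 : 0 <= k by case/orP: hx; rewrite ck // pmulr_lge0.
  have k_le0 : k <= 0 by case/orP: hy; rewrite ck // nmulr_lge0.
  move=> b bA; rewrite ck //.
  have -> : k = 0 by apply/eqP; rewrite eq_le k_le0 k_ge0.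
  exact: mul0r.
split.
- case=> c [c_ge0 [sum1 comb]]; rewrite undup_id // in sum1 comb.
  have c_rel : relation A c by rewrite /relation -comb.
  have c0 := vanish c c_rel; rewrite !c_ge0 // in c0.
  move: sum1; rewrite big_seq big1 => [/eqP|b bA]; last exact: c0.
  by rewrite eq_sym oner_eq0.
- move=> a aA [c [c_ge0 comb]]; rewrite undup_id ?filter_uniq // in comb.
  pose c' b := if b == a then -1 else c b.
  have c'_rel : relation A c'.
    rewrite /relation (bigD1_seq a) //= {1}/c' eqxx scaleN1r.
    rewrite -big_filter (eq_big_seq (fun b => c b *: b)) -?comb ?addNr //.
    by move=> b; rewrite mem_filter /c' => /andP [/negbTE -> _].
  have c'_ge0 b : b \in A -> b != a -> 0 <= c' b.
    by move=> bA ba; rewrite /c' (negbTE ba); apply: c_ge0; rewrite mem_filter ba.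
  have hx : (0 <= c' x1) || (0 <= c' x2).
    by case/orP: (one_differs a x12) => ?; apply/orP; [left | right]; apply: c'_ge0.
  have hy : (0 <= c' y1) || (0 <= c' y2).
    by case/orP: (one_differs a y12) => ?; apply/orP; [left | right]; apply: c'_ge0.
  move: (vanish c' c'_rel hx hy a aA); rewrite /c' eqxx => /eqP.
  by rewrite oppr_eq0 oner_eq0.
Qed.

End ConicalCriterion.

Lemma notin_pair (T : finType) (i j l : T) : i != j -> i != l -> i \notin [set j; l].
Proof. by move=> ij il; rewrite !inE negb_or ij il. Qed.

Lemma co_point_of_card (T : finType) (S : {set T}) :
  #|S|.+1 = #|T| -> exists a, S = [set~ a].
Proof.
move=> cardS; have /cards1P [a Sa] : #|~: S| == 1%N.
  by have := cardsC S; rewrite -cardS => /eqP; rewrite -addn1 eqn_add2l.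
by exists a; rewrite -Sa setCK.
Qed.

Lemma setI_co_points (T : finType) (a b : T) : [set~ a] :&: [set~ b] = ~: [set a; b].
Proof. by apply/setP => i; rewrite !inE negb_or. Qed.

Lemma symdiff_co_points (T : finType) (a b : T) : a != b ->
  ([set~ a] :\: [set~ b]) :|: ([set~ b] :\: [set~ a]) = [set a; b].
Proof.
move=> ab; apply/setP => i; rewrite !inE !negbK.
by case: (eqVneq i a) => [-> | _]; rewrite ?andbF ?andbT ?orbF.
Qed.

Lemma co_pair_absurd (T : finType) (x y : T) (S : {set T}) :
  x \in S -> ~: [set x; y] \subset S -> S != setT -> S != [set~ y] -> False.
Proof.
move=> xS big_S ST Sy; have co_y : [set~ y] \subset S.
  apply/subsetP => i; rewrite in_setC1 => iy.
  have [-> // | ix] := eqVneq i x.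
  by apply: (subsetP big_S); rewrite !inE negb_or ix iy.
have [yS | yS] := boolP (y \in S).
- move/eqP: ST; apply; apply/eqP; rewrite eqEsubset subsetT; apply/subsetP => i _.
  by have [-> // | iy] := eqVneq i y; apply: (subsetP co_y); rewrite in_setC1.
- move/eqP: Sy; apply; apply/eqP; rewrite eqEsubset co_y andbT.
  by apply/subsetP => i iS; rewrite in_setC1; apply: (contraNneq _ yS) => <-.
Qed.

Lemma pair_trichotomy (T : finType) (a b : T) (S : {set T}) :
  a != b -> S != setT -> S != [set~ a] -> S != [set~ b] -> (2 <= #|S|)%N ->
  [\/ S \subset ~: [set a; b], S = [set a; b] |
      exists c d, [/\ (a \in S) || (b \in S), c \notin S, d \in S,
                      c \notin [set a; b] & d \notin [set a; b]]].
Proof.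
move=> ab ST Sa Sb S2.
have [meets | avoids] := boolP ((a \in S) || (b \in S)); last first.
  apply: Or31; apply/subsetP => i iS; rewrite !inE negb_or.
  case/norP: avoids => aS bS; apply/andP.
  by split; [apply: (contraNneq _ aS) | apply: (contraNneq _ bS)] => <-.
have [in_pair | /subsetPn [d dS d_out]] := boolP (S \subset [set a; b]).
  by apply: Or32; apply/eqP; rewrite eqEcard in_pair cards2 ab.
have /subsetPn [c c_out cS] : ~~ (~: [set a; b] \subset S).
  apply/negP => big_S; case/orP: meets => [aS | bS].
  - exact: (co_pair_absurd aS big_S ST Sb).
  - by apply: (co_pair_absurd bS _ ST Sa); rewrite setUC.
by apply: Or33; exists c, d; rewrite inE in c_out.
Qed.

Section Barycentric.
Variables (R : realFieldType) (n : nat).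
Local Notation V := 'rV[R]_n.
Variable e : 'I_n.+1 -> V.
Hypothesis e_affine : affinely_independent e.
Hypothesis e_sum0 : \sum_i e i = 0.

Lemma vertex_relation_const (c : 'I_n.+1 -> R) :
  \sum_i c i *: e i = 0 -> forall i j, c i = c j.
Proof.
move=> rel; set m := (\sum_i c i) / n.+1%:R.
have rel_m : \sum_i (c i - m) *: e i = 0.
  under eq_bigr do rewrite scalerBl.
  by rewrite sumrB rel -scaler_sumr e_sum0 scaler0 subr0.
have sum_m : \sum_i (c i - m) = 0.
  rewrite sumrB sumr_const card_ord /m; apply/eqP; rewrite subr_eq0; apply/eqP.
  by rewrite -[RHS]mulr_natr divfK // pnatr_eq0.
move=> i j; have c_m := e_affine rel_m sum_m.
by move: (c_m i) (c_m j) => /eqP + /eqP; rewrite !subr_eq0 => /eqP -> /eqP ->.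
Qed.

Lemma coord_gap_eq (xc yc : 'I_n.+1 -> R) :
  \sum_i xc i *: e i = \sum_i yc i *: e i -> forall j l, xc j - xc l = yc j - yc l.
Proof.
move=> eq_xy j l; have := vertex_relation_const (c := fun i => xc i - yc i) _ j l.
under eq_bigr do rewrite scalerBl; rewrite sumrB eq_xy subrr => /(_ erefl).
lra.
Qed.

Lemma vertex_coords k : e k = \sum_i (i == k)%:R *: e i.
Proof.
rewrite (bigD1 k) //= eqxx scale1r big1 ?addr0 // => i /negbTE ->.
by rewrite scale0r.
Qed.

(* Distinct vertices have different coordinate gaps, hence differ. *)
Lemma vertex_inj : injective e.
Proof.
move=> i k eik; apply/eqP; apply: contraT => ik.
have := @coord_gap_eq (fun t => (t == i)%:R) (fun t => (t == k)%:R) _ i k.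
rewrite -!vertex_coords eik => /(_ erefl).
rewrite !eqxx eq_sym (negbTE ik) subr0 sub0r => /eqP.
by rewrite -addr_eq0 -natrD pnatr_eq0.
Qed.

Lemma pos_hull_of_coords (S : {set 'I_n.+1}) (g : 'I_n.+1 -> R) :
  (forall i, i \in S -> 0 <= g i) -> in_pos_hullE e S (\sum_(i in S) g i *: e i).
Proof.
move=> g_ge0; exists (fun v => \sum_(i in S) (v == e i)%:R * g i).
have weight k : k \in S -> \sum_(i in S) (e k == e i)%:R * g i = g k.
  move=> kS; rewrite (bigD1 k) //= eqxx mul1r big1 ?addr0 // => i /andP [_ ik].
  by rewrite (inj_eq vertex_inj) eq_sym (negbTE ik) mul0r.
split.
- by move=> v /mapP [k]; rewrite mem_enum => kS ->; rewrite weight ?g_ge0.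
- rewrite undup_id ?(map_inj_uniq vertex_inj) ?enum_uniq // big_map big_enum /=.
  by apply: eq_bigr => k kS; rewrite weight.
Qed.

Lemma coords_of_pos_hull S p : in_pos_hullE e S p ->
  exists g : 'I_n.+1 -> R, (forall i, i \in S -> 0 <= g i) /\ p = \sum_(i in S) g i *: e i.
Proof.
case=> c [c_ge0 ->]; exists (fun i => c (e i)); split.
- by move=> i iS; apply: c_ge0; apply/mapP; exists i; rewrite ?mem_enum.
- by rewrite undup_id ?(map_inj_uniq vertex_inj) ?enum_uniq // big_map big_enum.
Qed.

(* A point with support S has barycentric coordinates that are positive on S
   and zero off S: a zero coordinate on S would give a smaller support. *)
Lemma support_coords p S : is_support e p S ->
  exists P : 'I_n.+1 -> R, [/\ forall i, i \in S -> 0 < P i,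
     forall i, i \notin S -> P i = 0 & p = \sum_i P i *: e i].
Proof.
case=> /coords_of_pos_hull [g [g_ge0 defp]] minS.
exists (fun i => if i \in S then g i else 0); split.
- move=> i iS; rewrite iS lt_def g_ge0 // andbT; apply/eqP => gi0.
  apply: (minS (S :\ i)); first by rewrite properD1.
  suff -> : p = \sum_(k in S :\ i) g k *: e k.
    by apply: pos_hull_of_coords => k /setD1P [_ /g_ge0].
  rewrite defp (bigD1 i) //= gi0 scale0r add0r.
  by apply: eq_bigl => k; rewrite !inE andbC.
- by move=> i /negbTE ->.
- by rewrite defp big_mkcond; apply: eq_bigr => i _; case: (i \in S); rewrite ?scale0r.
Qed.

(* A support is never the whole vertex set: subtracting the smallest
   coordinate from all coordinates represents the point without one vertex. *)
Lemma support_neqT p S : is_support e p S -> S != setT.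
Proof.
move=> suppS; apply/eqP => ST; have [P [P_gt0 _ defp]] := support_coords suppS.
have [k _ minPk] := @arg_minP _ _ _ ord0 predT P isT.
case: suppS => _ minS; apply: (minS (setT :\ k)); first by rewrite ST properD1 ?inE.
suff -> : p = \sum_(i in setT :\ k) (P i - P k) *: e i.
  by apply: pos_hull_of_coords => i _; rewrite subr_ge0 minPk.
have -> : p = \sum_i (P i - P k) *: e i.
  under eq_bigr do rewrite scalerBl.
  by rewrite sumrB -scaler_sumr e_sum0 scaler0 subr0.
rewrite (bigD1 k) //= subrr scale0r add0r.
by apply: eq_bigl => i; rewrite !inE andbT.
Qed.

Lemma support_card p S : is_support e p S -> (#|S| <= n)%N.
Proof.
move=> /support_neqT ST; rewrite -ltnS.
have : (#|S| < #|[set: 'I_n.+1]|)%N by rewrite proper_card // properT.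
by rewrite cardsT card_ord.
Qed.

(* Two supports covering the vertex set and sharing n-1 vertices are the
   complements of two distinct vertices: each has at most n vertices, and
   their sizes add up to 2n. *)
Lemma covering_supports p q Sp Sq :
  is_support e p Sp -> is_support e q Sq ->
  Sp :|: Sq = setT -> #|Sp :&: Sq| = (n - 1)%N ->
  exists a b, [/\ a != b, Sp = [set~ a] & Sq = [set~ b]].
Proof.
move=> suppP suppQ cover meet.
have := cardsUI Sp Sq; rewrite cover meet cardsT card_ord.
move: (support_card suppP) (support_card suppQ) => le_p le_q sizes.
have [a defSp] : exists a, Sp = [set~ a] by apply: co_point_of_card; rewrite card_ord; lia.
have [b defSq] : exists b, Sq = [set~ b] by apply: co_point_of_card; rewrite card_ord; lia.
exists a, b; split=> //.
have : a \in Sp :|: Sq by rewrite cover inE.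
by rewrite defSp defSq !inE eqxx.
Qed.

Definition frame (x y : V) (K : {set 'I_n.+1}) : seq V :=
  x :: y :: [seq e i | i <- enum K].

Lemma sum_frame x y K (c : V -> R) :
  \sum_(b <- frame x y K) c b *: b =
  c x *: x + (c y *: y + \sum_(i in K) c (e i) *: e i).
Proof. by rewrite !big_cons big_map big_enum. Qed.

Lemma size_frame x y j l : j != l -> size (frame x y (~: [set j; l])) = n.+1.
Proof.
move=> jl; rewrite /= size_map -cardE.
by have := cardsC [set j; l]; rewrite cards2 jl card_ord -add2n.
Qed.

Lemma coord_gap_neq (xc yc : 'I_n.+1 -> R) j l :
  xc j - xc l != yc j - yc l -> \sum_i xc i *: e i != \sum_i yc i *: e i.
Proof. by apply: contra_neq => /coord_gap_eq ->. Qed.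

(* The entries of the frame are distinct as soon as the coordinate gaps
   x_j - x_l and y_j - y_l are of opposite signs: vertices e_i with i <> j, l
   have gap 0. *)
Lemma frame_uniq x y (xc yc : 'I_n.+1 -> R) j l :
  x = \sum_i xc i *: e i -> y = \sum_i yc i *: e i ->
  xc j - xc l < 0 -> 0 < yc j - yc l -> uniq (frame x y (~: [set j; l])).
Proof.
move=> defx defy x_gap y_gap.
have off_vertices z zc : z = \sum_i zc i *: e i -> zc j - zc l != 0 ->
    z \notin [seq e i | i <- enum (~: [set j; l])].
  move=> -> z_gap; apply/mapP => -[i]; rewrite mem_enum !inE negb_or.
  case/andP=> ij il; apply/eqP; rewrite vertex_coords.
  apply: (coord_gap_neq (j := j) (l := l)).
  by rewrite ![_ == i]eq_sym (negbTE ij) (negbTE il) subrr.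
have x_neq_y : x != y by apply/eqP; rewrite defx defy => /coord_gap_eq/(_ j l); lra.
rewrite /frame /= (map_inj_uniq vertex_inj) enum_uniq in_cons negb_or x_neq_y.
by rewrite (off_vertices _ _ defx (ltr0_neq0 x_gap)) (off_vertices _ _ defy (lt0r_neq0 y_gap)).
Qed.

(* The 2x2 minor of the coordinate columns xc, yc formed by the row gaps
   (j - l) and (i - j); up to sign it is the weight of e_i in the relation of
   the frame. *)
Definition frame_minor (xc yc : 'I_n.+1 -> R) j l i : R :=
  (yc j - yc l) * (xc i - xc j) - (xc j - xc l) * (yc i - yc j).

(* The relations of the frame of x and y over the complement of {j, l} form
   a line: pulled back to barycentric coordinates, a relation is constant,
   which determines it from its value at x. *)
Lemma frame_relations x y (xc yc : 'I_n.+1 -> R) j l (c : V -> R) :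
  x = \sum_i xc i *: e i -> y = \sum_i yc i *: e i -> yc j - yc l != 0 ->
  relation (frame x y (~: [set j; l])) c ->
  exists k, [/\ c x = k * (yc j - yc l), c y = - k * (xc j - xc l)
     & forall i, i \notin [set j; l] -> c (e i) = - k * frame_minor xc yc j l i].
Proof.
move=> defx defy y_gap; rewrite /relation sum_frame => rel.
set K := ~: [set j; l].
pose g i := c x * xc i + c y * yc i + (if i \in K then c (e i) else 0).
have g_const : forall i k, g i = g k.
  apply: vertex_relation_const; rewrite -[RHS]rel /g.
  set cx := c x; set cy := c y; rewrite defx defy !scaler_sumr.
  rewrite (big_mkcond (mem K)) -!big_split /=; apply: eq_bigr => i _.
  by rewrite !scalerDl !scalerA addrA; case: ifP; rewrite ?scale0r.
have in_K i : (i \in K) = (i \notin [set j; l]) by rewrite inE.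
have g_jl := g_const j l; rewrite /g !in_K !inE !eqxx orbT /= !addr0 in g_jl.
have c_y : c y * (yc j - yc l) = - (c x * (xc j - xc l)) by lra.
exists (c x / (yc j - yc l)); split.
- by rewrite divfK.
- by apply: (mulIf y_gap); rewrite c_y; field.
- move=> i iK; have g_ij := g_const i j.
  rewrite /g in_K iK !inE !eqxx /= addr0 in g_ij.
  have -> : c (e i) = c x * (xc j - xc i) + c y * (yc j - yc i) by lra.
  apply: (mulIf y_gap); rewrite /frame_minor mulrDl (mulrAC (c y)) c_y.
  by field.
Qed.

(* The weight spanning the line of relations of the frame, as read off from
   [frame_relations]; on the vertices e_i it is given through their index. *)
Definition frame_weight x y (xc yc : 'I_n.+1 -> R) j l (v : V) : R :=
  if v == x then yc j - yc l else if v == y then - (xc j - xc l) else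
  if [pick i | e i == v] is Some i then - frame_minor xc yc j l i else 0.

Lemma frame_weight_y x y xc yc j l :
  uniq (frame x y (~: [set j; l])) -> frame_weight x y xc yc j l y = - (xc j - xc l).
Proof.
rewrite /frame_weight /= in_cons eq_sym => /andP [/norP [/negbTE -> _] _].
by rewrite eqxx.
Qed.

Lemma frame_weight_vertex x y xc yc j l i :
  uniq (frame x y (~: [set j; l])) -> i \notin [set j; l] ->
  frame_weight x y xc yc j l (e i) = - frame_minor xc yc j l i.
Proof.
rewrite /frame /= in_cons negb_or => /and3P [/andP [_ x_off] y_off _] i_out.
have i_in : e i \in [seq e k | k <- enum (~: [set j; l])].
  by rewrite map_f // mem_enum inE.
rewrite /frame_weight; case: eqP => [ex | _]; first by rewrite -ex i_in in x_off.
case: eqP => [ey | _]; first by rewrite -ey i_in in y_off.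
by case: pickP => [k /eqP /vertex_inj -> // | /(_ i)]; rewrite eqxx.
Qed.

Lemma frame_relation_line x y (xc yc : 'I_n.+1 -> R) j l :
  x = \sum_i xc i *: e i -> y = \sum_i yc i *: e i ->
  xc j - xc l < 0 -> 0 < yc j - yc l ->
  forall c, relation (frame x y (~: [set j; l])) c ->
  exists k, forall b, b \in frame x y (~: [set j; l]) ->
    c b = k * frame_weight x y xc yc j l b.
Proof.
move=> defx defy x_gap y_gap c /(frame_relations defx defy (lt0r_neq0 y_gap)).
case=> k [c_x c_y c_K]; have uF := frame_uniq defx defy x_gap y_gap.
exists k => b; rewrite !in_cons => /or3P [/eqP -> | /eqP -> | /mapP [i iK ->]].
- by rewrite /frame_weight eqxx.
- by rewrite frame_weight_y // c_y mulrN mulNr.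
- have i_out : i \notin [set j; l] by move: iK; rewrite mem_enum inE.
  by rewrite frame_weight_vertex // c_K // mulrN mulNr.
Qed.

Section Obstruction.
Variable X : seq V.
Hypothesis vertices_in_X : forall i, e i \in X.
Hypothesis good_X : forall A : seq V,
  uniq A -> size A = n.+1 -> {subset A <= X} -> good_position A.

(* The basic obstruction: for two points x, y of X whose coordinate gaps at
   (j, l) have opposite signs, the minors at two further indices cannot both
   be positive, for otherwise their frame would be n+1 points of X in
   conical position. *)
Lemma frame_obstruction x y (xc yc : 'I_n.+1 -> R) j l i1 i2 :
  x \in X -> y \in X -> x = \sum_i xc i *: e i -> y = \sum_i yc i *: e i ->
  j != l -> i1 != i2 -> i1 \notin [set j; l] -> i2 \notin [set j; l] ->
  xc j - xc l < 0 -> 0 < yc j - yc l ->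
  0 < frame_minor xc yc j l i1 -> 0 < frame_minor xc yc j l i2 -> False.
Proof.
move=> xX yX defx defy jl i12 i1_out i2_out x_gap y_gap minor1 minor2.
have uF := frame_uniq defx defy x_gap y_gap.
apply: (good_X uF (size_frame x y jl)).
  by move=> b; rewrite !in_cons => /or3P [/eqP -> | /eqP -> | /mapP [i _ ->]].
have in_frame i : i \notin [set j; l] -> e i \in frame x y (~: [set j; l]).
  by move=> i_out; rewrite !in_cons map_f ?orbT // mem_enum inE.
have xy : x != y by move: uF; rewrite /= in_cons => /andP [/norP []].
apply: (conical_of_relation_line (w := frame_weight x y xc yc j l) uF _ _
  (in_frame _ i1_out) (in_frame _ i2_out) xy).
- by rewrite in_cons eqxx.
- by rewrite !in_cons eqxx orbT.
- by rewrite (inj_eq vertex_inj).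
- by rewrite /frame_weight eqxx.
- by rewrite frame_weight_y // oppr_gt0.
- by rewrite frame_weight_vertex // oppr_lt0.
- by rewrite frame_weight_vertex // oppr_lt0.
- exact: frame_relation_line.
Qed.


(* The frames of (p, q) and (p, e_a) force P c to be the
   least of P b, P c, P d, and then the frame of (p, r) is in conical
   position. *)
Lemma mixed_coords_absurd p q r (P Q Rc : 'I_n.+1 -> R) a b c d :
  p \in X -> q \in X -> r \in X ->
  p = \sum_i P i *: e i -> q = \sum_i Q i *: e i -> r = \sum_i Rc i *: e i ->
  P a = 0 -> (forall i, i != a -> 0 < P i) ->
  Q b = 0 -> (forall i, i != b -> 0 < Q i) ->
  (forall i, 0 <= Rc i) -> Rc c = 0 -> 0 < Rc d -> 0 < Rc a ->
  a != b -> c != a -> c != b -> d != a -> d != b -> c != d -> False.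
Proof.
move=> pX qX rX defp defq defr Pa P_gt0 Qb Q_gt0 Rc_ge0 Rc_c Rc_d Rc_a
  ab ca cb da db cd.
have [ba ac ad] : [/\ b != a, a != c & a != d] by split; rewrite eq_sym.
have [bc bd dc] : [/\ b != c, b != d & d != c] by split; rewrite eq_sym.
have := P_gt0 b ba; have := P_gt0 c ca; have := P_gt0 d da.
have := Q_gt0 a ab; have := Q_gt0 c cb; have := Q_gt0 d db; have := Rc_ge0 b.
move=> Rc_b Qd_gt0 Qc_gt0 Qa_gt0 Pd_gt0 Pc_gt0 Pb_gt0.
have not_b_least : ~ (P b <= P c /\ P b <= P d).
  case=> b_le_c b_le_d; apply: (frame_obstruction pX qX defp defq ab cd
    (notin_pair ca cb) (notin_pair da db)); rewrite /frame_minor ?Pa ?Qb; nra.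
have not_d_least : ~ (P d < P b /\ P d < P c).
  case=> d_lt_b d_lt_c; apply: (frame_obstruction pX (vertices_in_X a) defp
    (vertex_coords a) ad bc (notin_pair ba bd) (notin_pair ca cd));
  by rewrite /frame_minor ?Pa ?eqxx ?(negbTE da) ?(negbTE ba) ?(negbTE ca) /=; lra.
have c_lt_b : P c < P b.
  rewrite ltNge; apply/negP => b_le_c.
  case: (ltP (P d) (P b)) => [d_lt_b | b_le_d].
  + by apply: not_d_least; split => //; apply: lt_le_trans b_le_c.
  + by apply: not_b_least.
have c_le_d : P c <= P d.
  rewrite leNgt; apply/negP => d_lt_c.
  by apply: not_d_least; split => //; apply: lt_trans c_lt_b.
apply: (frame_obstruction pX rX defp defr ac bd (notin_pair ba bc) (notin_pair da dc)).
all: rewrite /frame_minor ?Pa ?Rc_c; nra.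
Qed.

Lemma mixed_support_absurd p q r a b c d Sr :
  p \in X -> q \in X -> r \in X ->
  is_support e p [set~ a] -> is_support e q [set~ b] -> is_support e r Sr ->
  a != b -> a \in Sr -> c \notin Sr -> d \in Sr ->
  c != a -> c != b -> d != a -> d != b -> False.
Proof.
move=> pX qX rX /support_coords [P [P_gt0 P_0 defp]]
  /support_coords [Q [Q_gt0 Q_0 defq]] /support_coords [Rc [Rc_gt0 Rc_0 defr]].
move=> ab aSr cSr dSr ca cb da db.
have cd : c != d by apply: contraNneq cSr => ->.
have Rc_ge0 i : 0 <= Rc i.
  by case: (boolP (i \in Sr)) => [/Rc_gt0 /ltW | /Rc_0 ->].
apply: (mixed_coords_absurd pX qX rX defp defq defr _ _ _ _ Rc_ge0 (Rc_0 c cSr)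
  (Rc_gt0 d dSr) (Rc_gt0 a aSr) ab ca cb da db cd).
- by apply: P_0; rewrite !inE negbK.
- by move=> i ia; apply: P_gt0; rewrite in_setC1.
- by apply: Q_0; rewrite !inE negbK.
- by move=> i ib; apply: Q_gt0; rewrite in_setC1.
Qed.

End Obstruction.

End Barycentric.

Theorem proposition6p9 (R : realFieldType) (n : nat)
    (e : 'I_n.+1 -> 'rV[R]_n) (X : seq 'rV[R]_n)
    (p q r : 'rV[R]_n) (Sp Sq Sr : {set 'I_n.+1}) :
  setting e X ->
  p \in X -> q \in X -> r \in X ->
  is_support e p Sp -> is_support e q Sq -> is_support e r Sr ->
  Sp :|: Sq = setT ->
  #|Sp :&: Sq| = (n - 1)%N ->
  Sr != Sp -> Sr != Sq -> (2 <= #|Sr|)%N ->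
  Sr \subset Sp :&: Sq \/ Sr = (Sp :\: Sq) :|: (Sq :\: Sp).
Proof.
case=> affine [sum0 [vertices_in_X [_ [_ good]]]] pX qX rX suppP suppQ suppR
  cover meet r_p r_q two_le.
have [a [b [ab defSp defSq]]] := covering_supports affine sum0 suppP suppQ cover meet.
rewrite defSp defSq setI_co_points symdiff_co_points //.
rewrite defSp in suppP r_p; rewrite defSq in suppQ r_q.
have [avoids | pair | [c [d [meets cSr dSr]]]] :=
  pair_trichotomy ab (support_neqT affine sum0 suppR) r_p r_q two_le.
- by left.
- by right.
rewrite !inE !negb_or => /andP [ca cb] /andP [da db]; exfalso.
have absurd := mixed_support_absurd affine sum0 vertices_in_X good.
case/orP: meets => [aSr | bSr].
- exact: (absurd p q r a b c d Sr pX qX rX suppP suppQ suppR ab aSr cSr dSr ca cb da db).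
- by apply: (absurd q p r b a c d Sr qX pX rX suppQ suppP suppR _ bSr cSr dSr cb ca db da);
    rewrite eq_sym.
Qed.
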